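(* Let $V$ be a finite set of $n$ elements and $w:\binom{V}{2}\to\mathbb{R}$ arbitrary real weights on its unordered pairs (not necessarily metric or nonnegative). Let $G$ be the complete graph on $V$ with edge weights $w$, let $T$ be a maximum-weight spanning tree of $G$, and let $\chi:V\to\{0,1\}$ be a proper 2-coloring of $T$. Then for every $\lambda\in\mathbb{R}$ and every $c\in\{0,\dots,n\}$: the graph $G_{>\lambda}$ admits a proper 2-coloring of cardinality $c$ if and only if $\mathrm{diam}(\chi)\le\lambda$ and $T_{>\lambda}$ admits a proper 2-coloring of cardinality $c$.
   Context: For a graph $H=(V,E)$ with edge weights $w$, $H_{>\lambda}$ denotes the spanning subgraph $(V,\{uv\in E: w(uv)>\lambda\})$. A 2-coloring $\varphi:V\to\{0,1\}$ is proper for a graph if the endpoints of every edge receive different colors; it has cardinality $c$ if one of its color classes has exactly $c$ elements. For $S\subseteq V$, $\mathrm{diam}(S)=\max_{\{u,v\}\subseteq S}w(uv)$, with $\mathrm{diam}(S)=-\infty$ if $|S|\le1$. For a 2-coloring $\varphi$, $\mathrm{diam}(\varphi)=\max\{\mathrm{diam}(\varphi^{-1}(0)),\mathrm{diam}(\varphi^{-1}(1))\}$, where diameters use all pair weights $w$. *)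

From HB Require Import structures.
From mathcomp Require Import all_boot all_order all_algebra.
From mathcomp Require Import reals constructive_ereal.
Set Implicit Arguments. Unset Strict Implicit. Unset Printing Implicit Defensive.
Import Order.TTheory GRing.Theory Num.Theory.
Local Open Scope ring_scope.

Section Defs.
Variables (R : realType) (V : finType).

Definition pairs : {set {set V}} := [set e : {set V} | #|e| == 2%N].

(* Weights w : binom(V,2) -> R are given as w : {set V} -> R, only used on 2-sets. *)

Definition adj (E : {set {set V}}) : rel V := fun u v => [set u; v] \in E.

Definition above (w : {set V} -> R) (E : {set {set V}}) (lam : R) : {set {set V}} :=
  [set e in E | lam < w e].

Definition connectedE (E : {set {set V}}) : Prop :=
  forall u v : V, connect (adj E) u v.
Definition acyclic (E : {set {set V}}) : Prop :=
  forall p : seq V, uniq p -> (2 < size p)%N -> ~~ cycle (adj E) p.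
Definition spanning_tree (E : {set {set V}}) : Prop :=
  [/\ E \subset pairs, connectedE E & acyclic E].

Definition weight (w : {set V} -> R) (E : {set {set V}}) : R := \sum_(e in E) w e.

Definition max_spanning_tree (w : {set V} -> R) (T : {set {set V}}) : Prop :=
  spanning_tree T /\ forall T', spanning_tree T' -> weight w T' <= weight w T.

Definition proper_col (E : {set {set V}}) (phi : V -> bool) : Prop :=
  forall u v : V, [set u; v] \in E -> phi u != phi v.

Definition has_card (phi : V -> bool) (c : nat) : Prop :=
  #|[set x | phi x == false]| = c \/ #|[set x | phi x == true]| = c.

Definition admits_proper_card (E : {set {set V}}) (c : nat) : Prop :=
  exists phi : V -> bool, proper_col E phi /\ has_card phi c.

(* diam(S) = max of w over pairs inside S, -oo if |S| <= 1. *)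
Definition diam (w : {set V} -> R) (S : {set V}) : \bar R :=
  \big[Order.max/-oo%E]_(e in pairs | e \subset S) (w e)%:E.

Definition diam_col (w : {set V} -> R) (phi : V -> bool) : \bar R :=
  Order.max (diam w [set x | phi x == false]) (diam w [set x | phi x == true]).

End Defs.

From HB Require Import structures.
From mathcomp Require Import all_boot all_order all_algebra.
From mathcomp Require Import reals constructive_ereal.
Import Order.TTheory GRing.Theory Num.Theory.
Set Implicit Arguments. Unset Strict Implicit. Unset Printing Implicit Defensive.
Local Open Scope ring_scope.

(* Cycle property: if T is a maximum-weight spanning tree and w(uv) > lam, then
   u and v are joined in T_{>lam}.  Otherwise the T-path from u to v leaves the
   component of u in T_{>lam} through a tree edge e with w(e) <= lam, and trading
   e for uv yields a heavier spanning tree.  Hence every edge of G_{>lam} joins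
   two vertices of one component of T_{>lam}, and for any proper colouring phi of
   T_{>lam} the sum phi + chi is constant on those components.  So phi is proper
   on G_{>lam} iff chi is, which says exactly that no colour class of chi
   contains a pair of weight > lam, i.e. diam(chi) <= lam.  The colouring itself
   is transferred unchanged. *)

Section Graphs.
Variable V : finType.
Implicit Types (A E F : {set {set V}}) (phi chi : V -> bool) (a b u v x y : V).

Lemma adj_sym E : symmetric (adj E).
Proof. by move=> x y; rewrite /adj setUC. Qed.

Lemma connect_adj_sym E : connect_sym (adj E).
Proof. exact/sym_connect_sym/adj_sym. Qed.

Lemma connect_adjS E F x y :
  E \subset F -> connect (adj E) x y -> connect (adj F) x y.
Proof. by move=> sEF; apply: connect_sub => s t st; apply/connect1/(subsetP sEF). Qed.

Lemma connect_set2 E a b x y :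
  [set x; y] = [set a; b] -> connect (adj E) a b -> connect (adj E) x y.
Proof.
move=> xy_ab ab; have : x \in [set a; b] by rewrite -xy_ab set21.
have : y \in [set a; b] by rewrite -xy_ab set22.
by move=> /set2P[]-> /set2P[]->; rewrite ?connect0 // connect_adj_sym.
Qed.

Lemma connect_setU1 E u v x y : connect (adj ([set u; v] |: E)) x y ->
  [|| connect (adj E) x y, connect (adj E) x u | connect (adj E) x v].
Proof.
apply: contraTT => /norP[nxy /norP[nxu nxv]].
have closedC : closed (adj ([set u; v] |: E)) (connect (adj E) x).
  apply: intro_closed; first exact: connect_adj_sym.
  move=> s t; rewrite /adj in_setU1 !inE => /orP[/eqP st_uv | st] xs.
    have /set2P[us|vs] : s \in [set u; v] by rewrite -st_uv set21.
      by rewrite -us xs in nxu.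
    by rewrite -vs xs in nxv.
  exact: connect_trans xs (connect1 st).
by apply: contraNN nxy => /(closed_connect closedC); rewrite !inE connect0 => <-.
Qed.

Lemma set2_neq a b s t : a \notin [set s; t] -> [set s; t] != [set a; b].
Proof. by apply: contraNneq => ->; exact: set21. Qed.

Definition forest E :=
  forall a b, [set a; b] \in E -> ~~ connect (adj (E :\ [set a; b])) a b.

Lemma forestS E F : E \subset F -> forest F -> forest E.
Proof.
move=> sEF forestF a b abE; apply: contra (forestF a b (subsetP sEF _ abE)).
exact/connect_adjS/setSD.
Qed.

Lemma forest_setU1 E u v : forest E -> ~~ connect (adj E) u v ->
  forest ([set u; v] |: E).
Proof.
move=> forestE nuv x y.
have uvE : [set u; v] \notin E by apply: contra nuv => uvE; apply: connect1.
have [xy_uv _|xy_uv] := eqVneq [set x; y] [set u; v].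
  rewrite xy_uv setU1K //; apply: contra nuv; exact: connect_set2 (esym xy_uv).
rewrite in_setU1 (negPf xy_uv) /= => xyE.
set E' := E :\ [set x; y].
have nxy : ~~ connect (adj E') x y := forestE x y xyE.
have nyx : ~~ connect (adj E') y x by rewrite connect_adj_sym.
have lift s t : connect (adj E') s t -> connect (adj E) s t.
  exact/connect_adjS/subD1set.
have xy : connect (adj E) x y by apply: connect1.
have yx : connect (adj E) y x by rewrite connect_adj_sym.
have ends z z' : connect (adj ([set u; v] |: E')) z z' -> ~~ connect (adj E') z z' ->
    connect (adj E') z u || connect (adj E') z v.
  by move=> /connect_setU1; case: (connect _ z z').
have sub : ([set u; v] |: E) :\ [set x; y] \subset [set u; v] |: E'.
  by apply/subsetP => g; rewrite !inE => /andP[-> ->].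
apply/negP => /(connect_adjS sub) cxy.
have cyx : connect (adj ([set u; v] |: E')) y x by rewrite connect_adj_sym.
(* x and y each reach u or v in E': the same endpoint contradicts [nxy],
   opposite endpoints join u to v in E through the edge xy. *)
move: (ends _ _ cxy nxy) (ends _ _ cyx nyx) => /orP[] xw /orP[] yw.
- by case/negP: nxy; rewrite (connect_trans xw) // connect_adj_sym.
- case/negP: nuv; rewrite connect_adj_sym in xw.
  exact: connect_trans (lift _ _ xw) (connect_trans xy (lift _ _ yw)).
- case/negP: nuv; rewrite connect_adj_sym in yw.
  exact: connect_trans (lift _ _ yw) (connect_trans yx (lift _ _ xw)).
- by case/negP: nxy; rewrite (connect_trans xw) // connect_adj_sym.
Qed.

Lemma path_setD1 E z t x p : path (adj E) x p -> z \notin x :: p ->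
  path (adj (E :\ [set z; t])) x p.
Proof.
move=> pE zp; apply: (@sub_in_path _ (predC1 z)) pE; last first.
  by apply/allP => s; rewrite inE; apply: contraTneq => ->.
move=> s s'; rewrite /adj !inE => sz s'z ss'.
by rewrite ss' andbT set2_neq // !inE negb_or eq_sym sz eq_sym s'z.
Qed.

Lemma acyclic_forest E : E \subset pairs V -> acyclic E -> forest E.
Proof.
move=> Epairs acycE a b abE; apply/negP => /connectP[p pE b_last].
have ab : a != b by have := subsetP Epairs _ abE; rewrite inE cards2; case: (a != b).
case: (shortenP pE) b_last => [[|c [|d q]]] qE uq _ b_last.
- by rewrite b_last eqxx in ab.
- by move: qE b_last => /= /andP[+ _] bc; rewrite -bc /adj in_setD1 eqxx.
- apply: (negP (acycE [:: a, c, d & q] uq isT)).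
  rewrite /cycle rcons_path (sub_path _ qE) /=; last first.
    by move=> s t; apply: subsetP; exact: subD1set.
  by rewrite adj_sym /= in b_last *; rewrite -b_last.
Qed.

Lemma forest_acyclic E : forest E -> acyclic E.
Proof.
move=> forestE [|x0 [|x1 p]] // /and3P[x0p x1p _] size_p; apply/negP.
rewrite /= rcons_path => /and3P[x01 pE last_x0].
have last_p : last x1 p \in p.
  by case: p size_p {x0p x1p pE last_x0} => //= y p _; exact: mem_last.
have x1_last : connect (adj (E :\ [set x0; x1])) x1 (last x1 p).
  by apply/connectP; exists p => //; exact: path_setD1 pE x0p.
apply: (negP (forestE x0 x1 x01)); rewrite connect_adj_sym.
apply: connect_trans x1_last (connect1 _).
rewrite /adj in_setD1 andbC; move: last_x0; rewrite /adj => -> /=.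
rewrite [[set x0; x1]]setUC set2_neq // !inE negb_or eq_sym (memPn x1p) //=.
by move: x0p; rewrite inE negb_or eq_sym => /andP[].
Qed.

Lemma spanning_tree_exchange T a b u v :
  spanning_tree T -> [set u; v] \in pairs V ->
  ~~ connect (adj (T :\ [set a; b])) u v ->
  connect (adj (T :\ [set a; b])) a u -> connect (adj (T :\ [set a; b])) v b ->
  spanning_tree ([set u; v] |: (T :\ [set a; b])).
Proof.
set T' := [set u; v] |: _; move=> [Tpairs Tconn Tacyc] uv_pair nuv au vb.
have sub : T :\ [set a; b] \subset T' by exact: subsetUr.
split.
- by rewrite subUset sub1set uv_pair (subset_trans (subD1set _ _)).
- move=> x y; apply: connect_sub (Tconn x y) => s t st.
  have [st_ab|st_ab] := eqVneq [set s; t] [set a; b]; last first.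
    apply: connect1; rewrite /adj in_setU1 in_setD1 st_ab.
    by rewrite (st : [set s; t] \in T) orbT.
  apply: connect_set2 st_ab _; apply: connect_trans (connect_adjS sub au) _.
  apply: connect_trans (connect_adjS sub vb); apply: connect1; exact: setU11.
- apply/forest_acyclic/forest_setU1 => //.
  exact: forestS (subD1set _ _) (acyclic_forest Tpairs Tacyc).
Qed.

Lemma crossing_edge E (S : {set V}) x y :
  connect (adj E) x y -> x \in S -> y \notin S ->
  exists a b, [/\ [set a; b] \in E, a \in S, b \notin S &
                  connect (adj (E :\ [set a; b])) b y].
Proof.
move=> /connectP[p + ->]; elim/last_ind: p => [|p z IHp] /=; first by move=> _ ->.
rewrite rcons_path last_rcons => /andP[pE zE] xS zS.
have [lS|lS] := boolP (last x p \in S).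
  by exists (last x p), z; split => //; exact: connect0.
have [a [b [abE aS bS bl]]] := IHp pE xS lS.
exists a, b; split => //; apply: connect_trans bl (connect1 _).
rewrite /adj in_setD1 (zE : [set last x p; z] \in E) andbT set2_neq //.
by apply/set2P => -[] a_eq; rewrite -a_eq aS in lS zS.
Qed.

Lemma proper_colS E F phi : E \subset F -> proper_col F phi -> proper_col E phi.
Proof. by move=> sEF phiF x y /(subsetP sEF)/phiF. Qed.

Lemma proper_col_connect E phi chi x y :
  proper_col E phi -> proper_col E chi -> connect (adj E) x y ->
  phi x (+) chi x = phi y (+) chi y.
Proof.
move=> phiE chiE xy.
have edge s t : adj E s t -> phi s (+) chi s = phi t (+) chi t.
  move=> st; move: (phiE s t st) (chiE s t st).
  by case: (phi s); case: (phi t); case: (chi s); case: (chi t).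
have closed_x : closed (adj E) [pred z | phi z (+) chi z == phi x (+) chi x].
  by move=> s t /edge; rewrite !inE => ->.
by move: (closed_connect closed_x xy); rewrite !inE eqxx => /esym/eqP.
Qed.

Lemma proper_col_transfer A F chi : A \subset F ->
  (forall u v, [set u; v] \in F -> connect (adj A) u v) -> proper_col A chi ->
  forall phi, proper_col F phi <-> proper_col F chi /\ proper_col A phi.
Proof.
move=> sAF F_A chiA phi.
have same_edges : proper_col A phi ->
    forall u v, [set u; v] \in F -> (phi u != phi v) = (chi u != chi v).
  move=> phiA u v /F_A /(proper_col_connect phiA chiA).
  by case: (phi u); case: (phi v); case: (chi u); case: (chi v).
split => [phiF | [chiF phiA] u v uvF].
  have phiA := proper_colS sAF phiF.
  by split => // u v uvF; rewrite -same_edges //; exact: phiF.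
by rewrite same_edges //; exact: chiF.
Qed.

End Graphs.

Section Weights.
Variables (R : realType) (V : finType) (w : {set V} -> R).
Implicit Types (E F T : {set {set V}}) (lam : R).

Lemma in_above E lam g : (g \in above w E lam) = (g \in E) && (lam < w g).
Proof. by rewrite inE. Qed.

Lemma above_sub E lam : above w E lam \subset E.
Proof. by apply/subsetP => g; rewrite in_above => /andP[]. Qed.

Lemma aboveS E F lam : E \subset F -> above w E lam \subset above w F lam.
Proof.
by move=> sEF; apply/subsetP => g; rewrite !in_above => /andP[/(subsetP sEF) -> ->].
Qed.

Lemma max_spanning_tree_connect T lam u v : max_spanning_tree w T ->
  [set u; v] \in pairs V -> lam < w [set u; v] ->
  connect (adj (above w T lam)) u v.
Proof.
move=> [[Tpairs Tconn Tacyc] Tmax] uv_pair lam_lt.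
set A := above w T lam; apply/idPn => nuvA.
pose S := [set z | connect (adj A) u z].
have [a [b [abT aS bS bv]]] : exists a b, [/\ [set a; b] \in T, a \in S, b \notin S &
    connect (adj (T :\ [set a; b])) b v].
  by apply: crossing_edge (Tconn u v) _ _; rewrite inE ?connect0.
rewrite !inE in aS bS; set e := [set a; b] in abT bv *.
have eA : e \notin A by apply: contra bS => eA; exact: connect_trans aS (connect1 eA).
have w_e : w e <= lam by move: eA; rewrite in_above abT /= -leNgt.
have ATe : A \subset T :\ e.
  apply/subsetP => g gA; rewrite in_setD1 (subsetP (above_sub T lam) _ gA) andbT.
  by apply: contraNneq eA => <-.
have au : connect (adj (T :\ e)) a u by rewrite connect_adj_sym (connect_adjS ATe aS).
have nuv : ~~ connect (adj (T :\ e)) u v.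
  apply: contra (acyclic_forest Tpairs Tacyc abT) => uv.
  by rewrite (connect_trans au) // (connect_trans uv) // connect_adj_sym.
have uvTe : [set u; v] \notin T :\ e by apply: contra nuv => uvTe; apply: connect1.
have vb : connect (adj (T :\ e)) v b by rewrite connect_adj_sym.
have := Tmax _ (spanning_tree_exchange (And3 Tpairs Tconn Tacyc) uv_pair nuv au vb).
rewrite /weight (big_setU1 _ uvTe) (big_setD1 _ abT) /= lerD2r => w_le.
by have := lt_le_trans lam_lt (le_trans w_le w_e); rewrite ltxx.
Qed.

Lemma diam_le S lam : (diam w S <= lam%:E)%E <->
  {in S &, forall x y, [set x; y] \in pairs V -> w [set x; y] <= lam}.
Proof.
split => [dS x y xS yS xy_pair | S_le].
  rewrite -lee_fin; apply: le_trans dS; apply: le_bigmax_cond.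
  by rewrite xy_pair; apply/subsetP => z /set2P[]->.
apply/bigmax_leP; split => [|g /andP[g_pair /subsetP gS]]; first exact: leNye.
move: (g_pair); rewrite inE => /cards2P[x [y [_ g_xy]]].
rewrite g_xy in g_pair gS *; rewrite lee_fin S_le //; apply: gS.
- exact: set21.
- exact: set22.
Qed.

Lemma diam_col_le chi lam :
  (diam_col w chi <= lam%:E)%E <-> proper_col (above w (pairs V) lam) chi.
Proof.
rewrite /diam_col ge_max; split.
  move=> /andP[d0 d1] x y; rewrite in_above => /andP[xy_pair lam_lt].
  apply/negP => /eqP chi_xy.
  have /diam_le class_le : (diam w [set z | chi z == chi x] <= lam%:E)%E by case: (chi x).
  move: (class_le x y) => /(_ _ _ xy_pair).
  by rewrite !inE chi_xy eqxx leNgt lam_lt => /(_ isT isT).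
move=> chiP; have class_le b : (diam w [set z | chi z == b] <= lam%:E)%E.
  apply/diam_le => x y + + xy_pair; rewrite !inE => /eqP <- /eqP chi_xy.
  rewrite leNgt; apply/negP => lam_lt.
  by move: (chiP x y); rewrite in_above xy_pair lam_lt chi_xy eqxx => /(_ isT).
by rewrite !class_le.
Qed.

End Weights.

Theorem lemma1 (R : realType) (V : finType) (w : {set V} -> R)
  (T : {set {set V}}) (chi : V -> bool) :
  max_spanning_tree w T -> proper_col T chi ->
  forall (lam : R) (c : nat), (c <= #|V|)%N ->
    (admits_proper_card (above w (pairs V) lam) c <->
     ((diam_col w chi <= lam%:E)%E /\ admits_proper_card (above w T lam) c)).
Proof.
move=> Tmax chiT lam c _.
have [[Tpairs _ _] _] := Tmax.
have G_A u v : [set u; v] \in above w (pairs V) lam -> connect (adj (above w T lam)) u v.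
  by rewrite in_above => /andP[]; exact: max_spanning_tree_connect.
have transfer := proper_col_transfer (aboveS w lam Tpairs) G_A
                   (proper_colS (above_sub w T lam) chiT).
rewrite diam_col_le; split.
  by move=> [phi [/transfer[chiG phiA] card_phi]]; split => //; exists phi.
by move=> [chiG [phi [phiA card_phi]]]; exists phi; split => //; apply/transfer.
Qed.
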